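(* Let $(G,c)$ be a tensor network template. Suppose there is an integer $d>0$ such that for every edge $e$ the capacity $c_e$ is a power of $d$ (that is, $c_e=d^{m_e}$ with $m_e\in\mathbb{Z}_{\ge0}$). Then $\mathrm{QMF}(G,c)=\mathrm{QMC}(G,c)$.
   Context: A tensor network template $(G,c)$ consists of a finite undirected graph $G$ (multiple edges allowed) with edge set $E$ whose vertex set is partitioned as $S\sqcup T\sqcup V$. Every element of $S$ (inputs) and every element of $T$ (outputs) is an open end of degree $1$; the elements of $V$ are called vertices. For $u\in S\sqcup T$, $e(u)$ denotes the edge incident to $u$. A capacity function $c:E\to\mathbb{Z}_{>0}$ is given, and to each edge $e$ one associates $\mathbb{C}^{c_e}$ with a fixed basis. At each vertex $v$ of degree $d_v$ an ordering $e(v,1),\dots,e(v,d_v)$ of the incident edge-ends is fixed. A tensor assignment $\mathcal T=(\mathcal T_v)_{v\in V}$ chooses $\mathcal T_v\in\bigotimes_{i=1}^{d_v}\mathbb{C}^{c_{e(v,i)}}$ for each $v$. Let $V_S=\bigotimes_{u\in S}\mathbb{C}^{c_{e(u)}}$ and $V_T=\bigotimes_{u\in T}\mathbb{C}^{c_{e(u)}}$. Contracting the network along all edges gives $\beta(G,c;\mathcal T)\in\mathrm{Hom}(V_S,V_T)$, whose matrix entries are $\langle I_T|\beta|I_S\rangle=\sum_W\prod_{v\in V}(\mathcal T_v)_{W|_v}$. Here $W$ ranges over all assignments of basis indices to all edges that agree with $I_S$ on the input edges and with $I_T$ on the output edges, and $W|_v$ is the tuple of indices on $e(v,1),\dots,e(v,d_v)$.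 The quantum max-flow is $\mathrm{QMF}(G,c)=\max_{\mathcal T}\operatorname{rank}\beta(G,c;\mathcal T)$. An edge cut set is a set $C\subseteq E$ for which there is a partition $S\sqcup T\sqcup V=\bar S\sqcup\bar T$ with $S\subseteq\bar S$, $T\subseteq\bar T$, and $C$ equal to the set of edges having one endpoint in $\bar S$ and the other in $\bar T$. The quantum min-cut is $\mathrm{QMC}(G,c)=\min_C\prod_{e\in C}c_e$, the minimum taken over all edge cut sets $C$. *)

From HB Require Import structures.
From mathcomp Require Import all_boot all_order all_algebra.
Set Implicit Arguments. Unset Strict Implicit. Unset Printing Implicit Defensive.
Import Order.TTheory GRing.Theory Num.Theory.

(* A tensor network template:
   - S (inputs), T (outputs), V (vertices), E (edges) are finite types;
     the node set is the disjoint union S + (T + V), so it is partitioned as S ⊔ T ⊔ V.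
   - ends e = the two endpoints of the (undirected) edge e; the order of the pair
     is irrelevant for every notion below.  Multiple edges and loops are allowed.
   - c : E -> nat is the capacity function. *)

Definition node (S T V : finType) := (S + (T + V))%type.

Section TensorNetwork.
Variables (S T V E : finType) (ends : E -> node S T V * node S T V) (c : E -> nat).

(* edge-ends (half-edges): (e, true) is the end of e at (ends e).1,
   (e, false) the end at (ends e).2 *)
Definition hend (h : E * bool) : node S T V :=
  if h.2 then (ends h.1).1 else (ends h.1).2.

Definition open_ends_degree_one : Prop :=
  (forall u : S, #|[pred h : E * bool | hend h == inl u]| = 1) /\
  (forall t : T, #|[pred h : E * bool | hend h == inr (inl t)]| = 1).

Definition capS (u : S) : nat :=
  if [pick h : E * bool | hend h == inl u] is Some h then c h.1 else 1.
Definition capT (t : T) : nat :=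
  if [pick h : E * bool | hend h == inr (inl t)] is Some h then c h.1 else 1.

Definition edge_assign := {dffun forall e : E, 'I_(c e)}.
Definition in_assign := {dffun forall u : S, 'I_(capS u)}.    (* basis of V_S *)
Definition out_assign := {dffun forall t : T, 'I_(capT t)}.   (* basis of V_T *)

Definition incident (v : V) := {h : E * bool | hend h == inr (inr v)}.
Definition local_assign (v : V) := {dffun forall h : incident v, 'I_(c (val h).1)}.

Definition restrict (W : edge_assign) (v : V) : local_assign v :=
  [ffun h : incident v => W (val h).1].

Definition agrees (IS : in_assign) (IT : out_assign) (W : edge_assign) : bool :=
  [forall h : E * bool,
     match hend h with
     | inl u => val (W h.1) == val (IS u)
     | inr (inl t) => val (W h.1) == val (IT t)
     | inr (inr _) => true
     end].

Section Field.
Variable C : numClosedFieldType.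

(* a tensor assignment: T_v ∈ ⊗_{edge-ends at v} C^{c_e}, given by its coordinates *)
Definition tensor_assign := forall v : V, {ffun local_assign v -> C}.

Definition beta_entry (Tn : tensor_assign) (IS : in_assign) (IT : out_assign) : C :=
  \sum_(W : edge_assign | agrees IS IT W) \prod_(v : V) Tn v (restrict W v).

(* matrix of beta(G,c;T) : V_S -> V_T in the tensor-product bases *)
Definition beta_mx (Tn : tensor_assign) : 'M[C]_(#|{: out_assign}|, #|{: in_assign}|) :=
  \matrix_(i, j) beta_entry Tn (enum_val j) (enum_val i).

Definition is_QMF (n : nat) : Prop :=
  (exists Tn : tensor_assign, \rank (beta_mx Tn) = n) /\
  (forall Tn : tensor_assign, (\rank (beta_mx Tn) <= n)%N).

End Field.

(* cuts: X = set of vertices put in \bar S (inputs are in \bar S, outputs in \bar T) *)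
Definition side (X : {set V}) (x : node S T V) : bool :=
  match x with
  | inl _ => true
  | inr (inl _) => false
  | inr (inr v) => v \in X
  end.

Definition cut_set (X : {set V}) : {set E} :=
  [set e | side X (ends e).1 != side X (ends e).2].

Definition cut_cap (X : {set V}) : nat := (\prod_(e in cut_set X) c e)%N.

Definition QMC : nat := \big[minn/cut_cap set0]_(X : {set V}) cut_cap X.

End TensorNetwork.

(* Upper bound: for a cut X, summing the contraction first over the indices
   on the cut edges writes beta as a sum of prod_(e in cut) c_e matrices of
   rank one, so rank beta <= QMC.
   Lower bound: with c_e = d ^ m_e, view an index on e as m_e digits in base d,
   one per unit of capacity. Max-flow/min-cut for the integer capacities m and
   the decomposition of an integral maximum flow into walks give, for some cut
   X, n = sum_(e in X) m_e walks from inputs to outputs using pairwise distinct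
   capacity units. Let every vertex tensor be the indicator of the local
   restrictions of the assignments that put one digit x_j on all units of walk
   j and 0 on unused units. Then beta sends the input basis vector of x to the
   output basis vector of x, so rank beta >= d ^ n = prod_(e in X) c_e >= QMC. *)

From HB Require Import structures.
From mathcomp Require Import all_boot all_order all_algebra.
From mathcomp Require Import zify ring.
Set Implicit Arguments. Unset Strict Implicit. Unset Printing Implicit Defensive.
Import Order.TTheory GRing.Theory Num.Theory.

Section MixSum.
Variables (I : finType) (U : I -> finType) (R : pzSemiRingType).
Local Notation DF := {dffun forall i : I, U i}.

Definition mix (A : pred I) (W1 W2 : DF) : DF :=
  [ffun i => if A i then W1 i else W2 i].

Local Open Scope ring_scope.

(* [mix A W W0 == W] says that [W] agrees with [W0] outside [A]. *)
Lemma sum_mul_mix (A : pred I) (W0 : DF) (f g : DF -> R) :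
    (forall W W', f (mix A W W') = f W) -> (forall W W', g (mix A W' W) = g W) ->
  \sum_W f W * g W =
  (\sum_(W | mix A W W0 == W) f W) * (\sum_(W | mix A W0 W == W) g W).
Proof.
move=> f_loc g_loc; rewrite big_distrl /=.
under [RHS]eq_bigr do rewrite big_distrr /=.
rewrite pair_big /= (reindex_onto (fun p : DF * DF => mix A p.1 p.2)
  (fun W => (mix A W W0, mix A W0 W))) /=; last first.
  by move=> W _; apply/ffunP => i; rewrite !ffunE; case: (A i).
apply: eq_big => [[W1 W2]|[W1 W2] /andP [/eqP <- /eqP <-]] /=; last first.
  by rewrite f_loc g_loc.
have -> : mix A (mix A W1 W2) W0 = mix A W1 W0.
  by apply/ffunP => i; rewrite !ffunE; case: (A i).
have -> : mix A W0 (mix A W1 W2) = mix A W0 W2.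
  by apply/ffunP => i; rewrite !ffunE; case: (A i).
by rewrite xpair_eqE.
Qed.

End MixSum.

Lemma mxrank_sum_le (F : fieldType) (m n : nat) (J : finType) (P : pred J)
    (M : J -> 'M[F]_(m, n)) :
  (\rank (\sum_(j | P j) M j)%R <= \sum_(j | P j) \rank (M j))%N.
Proof.
apply: (big_rec2 (fun A k => \rank A <= k)%N); first by rewrite mxrank0.
by move=> j A k _ le_Ak; rewrite (leq_trans (mxrank_add _ _)) ?leq_add2l.
Qed.

Lemma sum_mul_delta (R : pzSemiRingType) (J : finType) (j0 : J) (F : J -> R) :
  (\sum_j F j * (j0 == j)%:R = F j0)%R.
Proof.
rewrite (bigD1 j0) //= eqxx mulr1 big1 ?addr0 // => j j_j0.
by rewrite eq_sym (negbTE j_j0) mulr0.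
Qed.

Section CutBound.
Variables (S T V E : finType) (ends : E -> node S T V * node S T V) (c : E -> nat).
Variable C : numClosedFieldType.
Hypothesis c_gt0 : forall e, (0 < c e)%N.
Variables (X : {set V}) (Tn : tensor_assign ends c C).

Local Notation EA := (edge_assign c).
Local Notation cut := (cut_set ends X).

Let W0 : EA := [ffun e => Ordinal (c_gt0 e)].

Definition src_edge : pred E := fun e => side X (ends e).1 || side X (ends e).2.
Definition snk_edge : pred E := fun e => ~~ side X (ends e).1 || ~~ side X (ends e).2.

Lemma cut_src_edge e : e \in cut -> src_edge e.
Proof. by rewrite /src_edge inE; case: (side X _); case: (side X _). Qed.

Lemma snk_edge_notin_cut e : e \notin cut -> snk_edge e -> ~~ src_edge e.
Proof. by rewrite /snk_edge /src_edge inE; case: (side X _); case: (side X _). Qed.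

Lemma hend_src_edge h : side X (hend ends h) -> src_edge h.1.
Proof. by case: h => e [] /=; rewrite /hend /src_edge /= => ->; rewrite ?orbT. Qed.

Lemma hend_snk_edge h : ~~ side X (hend ends h) -> snk_edge h.1.
Proof. by case: h => e [] /=; rewrite /hend /snk_edge /= => ->; rewrite ?orbT. Qed.

Definition agrees_in (IS : in_assign ends c) (W : EA) : bool :=
  [forall h : E * bool,
     if hend ends h is inl u then val (W h.1) == val (IS u) else true].
Definition agrees_out (IT : out_assign ends c) (W : EA) : bool :=
  [forall h : E * bool,
     if hend ends h is inr (inl t) then val (W h.1) == val (IT t) else true].

Lemma agreesE IS IT W : agrees IS IT W = agrees_in IS W && agrees_out IT W.
Proof.
apply/forallP/andP => [agr|[/forallP agr_in /forallP agr_out] h].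
  by split; apply/forallP => h; move: (agr h); case: (hend ends h) => [u|[t|v]].
by move: (agr_in h) (agr_out h); case: (hend ends h) => [u|[t|v]].
Qed.

Local Open Scope ring_scope.

Definition src_weight IS (W : EA) : C :=
  (agrees_in IS W)%:R * \prod_(v in X) Tn v (restrict ends W v).
Definition snk_weight IT (W : EA) : C :=
  (agrees_out IT W)%:R * \prod_(v | v \notin X) Tn v (restrict ends W v).

Lemma beta_entry_split IS IT :
  beta_entry Tn IS IT = \sum_W src_weight IS W * snk_weight IT W.
Proof.
rewrite /beta_entry big_mkcond; apply: eq_bigr => W _.
rewrite agreesE (bigID (mem X)) /= /src_weight /snk_weight.
by case: (agrees_in IS W); case: (agrees_out IT W); rewrite /= ?mul1r ?mul0r ?mulr0 ?mulr1.
Qed.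

Lemma src_weight_local IS (W W' : EA) :
  (forall e, src_edge e -> W e = W' e) -> src_weight IS W = src_weight IS W'.
Proof.
move=> eqW; rewrite /src_weight; congr ((nat_of_bool _)%:R * _).
  apply/forallP/forallP => agr h; move: (agr h);
  by case Eh: (hend ends h) => [u|[t|v]] //; rewrite eqW // hend_src_edge // Eh.
apply: eq_bigr => v vX; congr (Tn v _); apply/ffunP => h; rewrite !ffunE.
by apply: eqW; apply: hend_src_edge; rewrite (eqP (valP h)).
Qed.

Lemma snk_weight_local IT (W W' : EA) :
  (forall e, snk_edge e -> W e = W' e) -> snk_weight IT W = snk_weight IT W'.
Proof.
move=> eqW; rewrite /snk_weight; congr ((nat_of_bool _)%:R * _).
  apply/forallP/forallP => agr h; move: (agr h);
  by case Eh: (hend ends h) => [u|[t|v]] //; rewrite eqW // hend_snk_edge // Eh.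
apply: eq_bigr => v vX; congr (Tn v _); apply/ffunP => h; rewrite !ffunE.
by apply: eqW; apply: hend_snk_edge; rewrite (eqP (valP h)).
Qed.

Definition in_cut : pred E := fun e => e \in cut.

Definition cut_pattern (K : EA) : bool := mix in_cut K W0 == K.

Definition src_factor (K : EA) IS : C :=
  \sum_(W | mix src_edge W W0 == W) (mix in_cut W W0 == K)%:R * src_weight IS W.
Definition snk_factor (K : EA) IT : C :=
  \sum_(W | mix src_edge W0 W == W) snk_weight IT (mix in_cut K W).

(* Summing first over the indices [K] on the cut edges, the remaining sum
   separates into a part on the source side and a part on the sink side. *)
Lemma beta_entry_cut IS IT :
  beta_entry Tn IS IT = \sum_(K | cut_pattern K) src_factor K IS * snk_factor K IT.
Proof.
rewrite beta_entry_split (partition_big (mix in_cut ^~ W0) cut_pattern) /=;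
  last by move=> W _; apply/eqP/ffunP => e; rewrite !ffunE; case: (in_cut e).
apply: eq_bigr => K _; rewrite -sum_mul_mix; first last.
- move=> W W'; apply: snk_weight_local => e snk_e; rewrite !ffunE.
  by case: ifP => // /negbT cut_e; rewrite (negbTE (snk_edge_notin_cut cut_e snk_e)).
- move=> W W'; congr (_ * _); last by apply: src_weight_local => e src_e; rewrite ffunE src_e.
  congr ((_ : bool)%:R); congr (_ == _); apply/ffunP => e; rewrite !ffunE.
  by case: ifP => // /cut_src_edge ->.
rewrite big_mkcond; apply: eq_bigr => W _.
case: eqP => [<-|_]; last by rewrite !mul0r.
rewrite mul1r; congr (_ * snk_weight IT _).
by apply/ffunP => e; rewrite !ffunE; case: (in_cut e).
Qed.

Lemma card_cut_pattern : #|[pred K | cut_pattern K]| = cut_cap ends c X.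
Proof.
pose F e : pred 'I_(c e) := fun k => in_cut e || (k == W0 e).
have -> : #|[pred K | cut_pattern K]| = #|(family F : simpl_pred EA)|.
  apply: eq_card => K; rewrite !inE; apply/eqP/familyP => [<- e|KF].
    by rewrite /F ffunE unfold_in /=; case: (in_cut e); rewrite ?eqxx.
  apply/ffunP => e; rewrite ffunE; case: ifPn => // cut_e.
  by move: (KF e); rewrite /F unfold_in /= (negbTE cut_e) => /eqP.
rewrite card_family foldrE big_map big_enum /= /cut_cap [RHS]big_mkcond /=.
apply: eq_bigr => e _; rewrite /F /in_cut; case: (e \in cut).
  by rewrite -[RHS]card_ord; apply: eq_card.
by rewrite -(card1 (W0 e)); apply: eq_card => k; rewrite !inE.
Qed.

Lemma rank_beta_le_cut_cap : (\rank (beta_mx Tn) <= cut_cap ends c X)%N.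
Proof.
pose col K : 'M[C]_(#|{: out_assign ends c}|, 1) := \matrix_(i, j) snk_factor K (enum_val i).
pose row K : 'M[C]_(1, #|{: in_assign ends c}|) := \matrix_(i, j) src_factor K (enum_val j).
have -> : beta_mx Tn = \sum_(K | cut_pattern K) col K *m row K.
  apply/matrixP => i j; rewrite !mxE summxE beta_entry_cut.
  by apply: eq_bigr => K _; rewrite !mxE big_ord1 !mxE mulrC.
rewrite (leq_trans (mxrank_sum_le _ _)) // -card_cut_pattern.
apply: (@leq_trans (\sum_(K | cut_pattern K) 1)); last by rewrite sum1_card.
apply: leq_sum => K _.
by rewrite (leq_trans (mxrankM_maxr _ _)) ?rank_leq_row.
Qed.

End CutBound.

Section Walks.
Variables (S T V E : finType) (ends : E -> node S T V * node S T V).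
Local Notation N := (node S T V).

(* The half-edge [(e, b)] doubles as the arc of [e] leaving [hend ends (e, b)]. *)
Definition arc_tail (a : E * bool) : N := hend ends a.
Definition arc_head (a : E * bool) : N := hend ends (a.1, ~~ a.2).

Definition is_input (x : N) : bool := if x is inl _ then true else false.
Definition is_output (x : N) : bool := if x is inr (inl _) then true else false.
Definition is_vertex (x : N) : bool := if x is inr (inr _) then true else false.

Local Open Scope ring_scope.

Fixpoint walk_to_output (x : N) (p : seq (E * bool)) : bool :=
  if p is a :: p' then
    (arc_tail a == x) &&
    (if p' is [::] then is_output (arc_head a)
     else is_vertex (arc_head a) && walk_to_output (arc_head a) p')
  else false.

Definition walk_end (x : N) (p : seq (E * bool)) : N := last x (map arc_head p).

Lemma walk_end_output p x : walk_to_output x p -> is_output (walk_end x p).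
Proof.
elim: p x => [|a p IH] x //= /andP [_].
by case: p IH => [|b p] IH //= /andP [_ /IH].
Qed.

Lemma walk_output_arc p x : walk_to_output x p -> exists2 a, a \in p & is_output (arc_head a).
Proof.
elim: p x => [|a p IH] x //= /andP [_].
case: p IH => [|b p] IH; first by exists a; rewrite ?inE ?eqxx.
by case/andP=> _ /IH [a' a'p out_a']; exists a'; rewrite // inE a'p orbT.
Qed.

Lemma sum_walk_telescope (z : N) p x : walk_to_output x p ->
  \sum_(a <- p) (((arc_tail a == z)%:R - (arc_head a == z)%:R) : int)%R =
  ((x == z)%:R - (walk_end x p == z)%:R)%R.
Proof.
elim: p x => [|a p IH] x //= /andP [/eqP <-].
rewrite big_cons; case: p IH => [|b p] IH; first by rewrite big_nil addr0.
by case/andP=> _ /IH ->; rewrite /walk_end /=; ring.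
Qed.

Lemma arc_endsE a y : (arc_tail a == y) || (arc_head a == y) =
  ((ends a.1).1 == y) || ((ends a.1).2 == y).
Proof. by case: a => e []; rewrite /arc_tail /arc_head /hend //= orbC. Qed.

Definition walk_step (ok : pred (E * bool)) : rel N := fun x y =>
  ~~ is_output x && ~~ is_input y &&
  [exists a, ok a && (arc_tail a == x) && (arc_head a == y)].

Lemma path_walk_to_output ok q x :
    path (walk_step ok) x q -> uniq (x :: q) -> is_output (last x q) -> q != [::] ->
  exists p, [/\ walk_to_output x p, all ok p, uniq (map fst p) &
    forall a, a \in p -> (arc_tail a \in x :: q) && (arc_head a \in x :: q)].
Proof.
elim: q x => [|y q IH] x //= /andP [xy ypath] /andP [xNq uq] out_last _.
case/andP: xy => /andP [_ yNin] /existsP [a /andP [/andP [ok_a /eqP tl_a] /eqP hd_a]].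
case: q IH ypath uq out_last xNq => [|z q] IH ypath uq out_last xNq.
  exists [:: a]; split => //=; rewrite ?ok_a ?tl_a ?hd_a ?eqxx ?out_last //.
  by move=> b; rewrite inE => /eqP ->; rewrite tl_a hd_a !inE !eqxx orbT.
have [p [wp okp up p_in]] := IH y ypath uq out_last isT.
have y_vx : is_vertex y.
  move: ypath => /= /andP [/andP [/andP [yNout _] _] _].
  by move: yNin yNout; case: (y) => [|[]].
exists (a :: p); split => /=.
- by rewrite tl_a eqxx /= hd_a; case: p wp {okp up p_in} => [|b p] //= ->; rewrite y_vx.
- by rewrite ok_a okp.
- rewrite up andbT; apply/negP => /mapP [b bp eab].
  have /andP [tl_b hd_b] := p_in b bp.
  have : (arc_tail a == x) || (arc_head a == x) by rewrite tl_a eqxx.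
  rewrite arc_endsE eab -arc_endsE => /orP [] /eqP eb.
    by move: tl_b; rewrite eb (negbTE xNq).
  by move: hd_b; rewrite eb (negbTE xNq).
- move=> b; rewrite inE => /orP [/eqP ->|bp].
    by rewrite tl_a hd_a !inE !eqxx /= orbT.
  by have := p_in b bp; rewrite !inE => /andP [-> ->]; rewrite !orbT.
Qed.

(* [X] collects the vertices reachable from the inputs along [ok] arcs. *)
Lemma walk_or_closed_set (ok : pred (E * bool)) :
  (exists u p, [/\ walk_to_output (inl u) p, all ok p & uniq (map fst p)]) \/
  (exists X : {set V}, forall a, ok a -> side X (arc_tail a) -> side X (arc_head a)).
Proof.
pose R := [set x : N | [exists u : S, connect (walk_step ok) (inl u) x]].
have R_in u : inl u \in R by rewrite inE; apply/existsP; exists u.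
have R_step x y : x \in R -> walk_step ok x y -> y \in R.
  by rewrite !inE => /existsP [u ux] xy; apply/existsP; exists u; apply: connect_trans ux (connect1 xy).
case: (boolP [exists t : T, inr (inl t) \in R]) => [/existsP [t]|noT].
  rewrite inE => /existsP [u] /connectP [q0 q0path t_last]; move: t_last.
  case: (shortenP q0path) => q qpath uq _ t_last; left; exists u.
  have q_nil : q != [::] by case: (q) t_last.
  have out_q : is_output (last (inl u) q) by rewrite -t_last.
  by have [p [wp okp up _]] := path_walk_to_output qpath uq out_q q_nil; exists p.
right; exists [set v | inr (inr v) \in R] => a ok_a side_tl.
have [tl_R tl_Nout] : arc_tail a \in R /\ ~~ is_output (arc_tail a).
  case: (arc_tail a) side_tl => [u _|[t //|v]] /=; first by split; [exact: R_in|].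
  by rewrite inE => vR; split.
have hd_R : ~~ is_input (arc_head a) -> arc_head a \in R.
  move=> hd_Nin; apply: R_step tl_R _; rewrite /walk_step tl_Nout hd_Nin /=.
  by apply/existsP; exists a; rewrite ok_a !eqxx.
case hd_a: (arc_head a) hd_R => [u|[t|v]] //= /(_ isT); last by rewrite inE.
by move=> t_R; case/existsP: noT; exists t.
Qed.

End Walks.

Section Flows.
Variables (S T V E : finType) (ends : E -> node S T V * node S T V) (m : E -> nat).
Local Notation N := (node S T V).
Local Notation tail := (arc_tail ends).
Local Notation head := (arc_head ends).
Local Notation walk := (walk_to_output ends).

Local Open Scope ring_scope.

(* [phi e] is the flow along [e] from [(ends e).1] to [(ends e).2]. *)
Definition arc_sign (a : E * bool) : int := if a.2 then 1 else -1.
Definition arc_flow (phi : E -> int) (a : E * bool) : int := arc_sign a * phi a.1.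
Definition outflow (phi : E -> int) (x : N) : int := \sum_(a | tail a == x) arc_flow phi a.
Definition conservative (phi : E -> int) := forall v : V, outflow phi (inr (inr v)) = 0.
Definition feasible (phi : E -> int) := forall e, `|phi e| <= (m e)%:Z.
Definition flow_value (phi : E -> int) : int := \sum_(u : S) outflow phi (inl u).
Definition cut_weight (X : {set V}) : int := \sum_(e in cut_set ends X) (m e)%:Z.

Lemma norm_arc_flow phi a : `|arc_flow phi a| = `|phi a.1|.
Proof. by rewrite /arc_flow /arc_sign; case: a.2; rewrite ?mul1r ?mulN1r ?normrN. Qed.

Lemma arc_flow_bound phi a : feasible phi -> - (m a.1)%:Z <= arc_flow phi a <= (m a.1)%:Z.
Proof. by move=> phi_feas; rewrite -ler_norml norm_arc_flow. Qed.

Lemma sum_half_edges (F : E * bool -> int) :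
  \sum_a F a = \sum_e (F (e, true) + F (e, false)).
Proof.
rewrite (eq_bigr (fun a => F (a.1, a.2))); last by case.
by rewrite -(pair_bigA _ (fun e b => F (e, b))); apply: eq_bigr => e _; rewrite big_bool.
Qed.

Lemma flow_value_side phi X : conservative phi ->
  flow_value phi = \sum_e phi e * ((side X (ends e).1)%:R - (side X (ends e).2)%:R).
Proof.
move=> phi_cons.
have -> : flow_value phi = \sum_(x : N) (side X x)%:R * outflow phi x.
  rewrite big_sumType /= big_sumType /= [\sum_(t : T) _]big1 => [|t _]; last by rewrite mul0r.
  rewrite [\sum_(v : V) _]big1 => [|v _]; last by rewrite phi_cons mulr0.
  by rewrite !addr0; apply: eq_bigr => u _; rewrite mul1r.
have -> : \sum_(x : N) (side X x)%:R * outflow phi x =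
          \sum_a (side X (tail a))%:R * arc_flow phi a.
  rewrite /outflow; under eq_bigr do rewrite big_distrr /= big_mkcond /=.
  rewrite exchange_big /=; apply: eq_bigr => a _.
  rewrite (bigD1 (tail a)) //= eqxx big1 ?addr0 // => x /negbTE.
  by rewrite eq_sym => ->.
by rewrite sum_half_edges; apply: eq_bigr => e _; rewrite /arc_flow /arc_sign /=; ring.
Qed.

Lemma flow_value_cut phi X : conservative phi ->
  flow_value phi = \sum_(e in cut_set ends X) arc_flow phi (e, side X (ends e).1).
Proof.
move=> phi_cons; rewrite (flow_value_side X phi_cons) [RHS]big_mkcond.
apply: eq_bigr => e _; rewrite inE /arc_flow /arc_sign /=.
by case: (side X _); case: (side X _) => /=; ring.
Qed.

Lemma closed_cut_arc (ok : pred (E * bool)) X :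
    (forall a, ok a -> side X (tail a) -> side X (head a)) ->
  forall e, e \in cut_set ends X -> ~~ ok (e, side X (ends e).1).
Proof.
move=> X_closed e; rewrite inE => cut_e; apply/negP => /X_closed.
rewrite /arc_tail /arc_head /hend /=.
by case s1: (side X (ends e).1) cut_e; case: (side X (ends e).2); rewrite /= ?s1 // => _ /(_ isT).
Qed.

Lemma flow_value_le_cut_weight phi X : feasible phi -> conservative phi ->
  flow_value phi <= cut_weight X.
Proof.
move=> phi_feas phi_cons; rewrite (flow_value_cut X phi_cons) ler_sum // => e _.
by case/andP: (arc_flow_bound (e, side X (ends e).1) phi_feas).
Qed.

Definition push (phi : E -> int) (p : seq (E * bool)) (s : int) : E -> int :=
  fun e => phi e + s * \sum_(a <- p | a.1 == e) arc_sign a.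

Lemma outflow_unit_arc a z :
  \sum_(b | tail b == z) (a.1 == b.1)%:R * (arc_sign a * arc_sign b) =
  (tail a == z)%:R - (head a == z)%:R.
Proof.
rewrite big_mkcond sum_half_edges (bigD1 a.1) //= big1 ?addr0 => [|e /negbTE ne].
  by case: a => e [] /=; rewrite /arc_sign /= eqxx;
     case: (tail (e, true) == z); case: (tail (e, false) == z) => /=; ring.
by rewrite [a.1 == e]eq_sym ne /= !mul0r !if_same addr0.
Qed.

Lemma outflow_push phi p s z : outflow (push phi p s) z =
  outflow phi z + s * \sum_(a <- p) ((tail a == z)%:R - (head a == z)%:R).
Proof.
have arc_flow_push b : arc_flow (push phi p s) b =
    arc_flow phi b + s * \sum_(a <- p) (a.1 == b.1)%:R * (arc_sign a * arc_sign b).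
  rewrite /arc_flow /push big_mkcond mulrDr mulrCA big_distrr; congr (_ + s * _).
  by apply: eq_bigr => a _; case: (a.1 == b.1) => /=; ring.
rewrite /outflow; under eq_bigr do rewrite arc_flow_push.
rewrite big_split -big_distrr /= exchange_big /=.
by congr (_ + s * _); apply: eq_bigr => a _; exact: outflow_unit_arc.
Qed.

Lemma push_notin phi p s e : e \notin map fst p -> push phi p s e = phi e.
Proof.
move=> eNp; rewrite /push big1_seq ?mulr0 ?addr0 // => a /andP [/eqP ea ap].
by rewrite -ea (map_f fst ap) in eNp.
Qed.

Lemma sum_arc_sign_uniq p a : uniq (map fst p) -> a \in p ->
  \sum_(b <- p | b.1 == a.1) arc_sign b = arc_sign a.
Proof.
elim: p => [|b p IH] //= /andP [bNp up]; rewrite inE big_cons => /orP [/eqP ->|ap].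
  rewrite eqxx big1_seq ?addr0 // => b' /andP [/eqP eb' b'p].
  by rewrite -eb' (map_f fst b'p) in bNp.
have -> : (b.1 == a.1) = false by apply: contraNF bNp => /eqP ->; rewrite (map_f fst ap).
exact: IH.
Qed.

Lemma arc_flow_push_in phi p s a : uniq (map fst p) -> a \in p ->
  arc_flow (push phi p s) a = arc_flow phi a + s.
Proof.
move=> up ap; rewrite /arc_flow /push sum_arc_sign_uniq // mulrDr mulrCA.
by rewrite /arc_sign; case: a.2; rewrite ?mulr1 ?mulrNN ?mulr1.
Qed.

Lemma push_feasible phi p s : feasible phi -> uniq (map fst p) ->
    (forall a, a \in p -> `|arc_flow phi a + s| <= (m a.1)%:Z) ->
  feasible (push phi p s).
Proof.
move=> phi_feas up p_feas e; case: (boolP (e \in map fst p)) => [/mapP [a ap ->]|eNp].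
  by rewrite -norm_arc_flow arc_flow_push_in // p_feas.
by rewrite push_notin.
Qed.

Lemma push_walk phi p s u : conservative phi -> walk (inl u) p ->
  conservative (push phi p s) /\ flow_value (push phi p s) = flow_value phi + s.
Proof.
move=> phi_cons wp; have [t end_t] : exists t, walk_end ends (inl u) p = inr (inl t).
  by move: (walk_end_output wp); case: (walk_end _ _) => [|[t|]] // _; exists t.
have tele z := sum_walk_telescope z wp; rewrite end_t in tele; split.
  by move=> v; rewrite outflow_push phi_cons tele /= subrr mulr0 addr0.
rewrite /flow_value; under eq_bigr do rewrite outflow_push tele /=.
rewrite big_split -big_distrr /=; congr (_ + _).
rewrite (bigD1 u) //= eqxx big1 => [|u' u'_u]; first by rewrite subr0 addr0 mulr1.
suff /negbTE-> : inl u != inl u' :> N by rewrite subrr.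
by apply: contra u'_u => /eqP [->].
Qed.

Lemma augment_or_saturated_cut phi : feasible phi -> conservative phi ->
  (exists phi', [/\ feasible phi', conservative phi' & flow_value phi' = flow_value phi + 1]) \/
  (exists X, cut_weight X <= flow_value phi).
Proof.
move=> phi_feas phi_cons.
case: (walk_or_closed_set ends (fun a => arc_flow phi a < (m a.1)%:Z))
  => [[u [p [wp res_p up]]]|[X X_closed]].
  left; exists (push phi p 1); have [push_cons push_val] := push_walk 1 phi_cons wp.
  split => //; apply: push_feasible => // a ap; have res_a := allP res_p a ap.
  have /andP [lo hi] := arc_flow_bound a phi_feas; rewrite ler_norml.
  by set f := arc_flow phi a in res_a lo hi *; set k := m a.1 in res_a lo hi *; apply/andP; split; lia.
right; exists X; rewrite (flow_value_cut X phi_cons) ler_sum // => e cut_e.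
by rewrite leNgt (closed_cut_arc X_closed cut_e).
Qed.

Lemma max_flow_min_cut : exists phi, [/\ feasible phi, conservative phi &
  exists X, cut_weight X <= flow_value phi].
Proof.
have flow_ge k : exists phi, [/\ feasible phi, conservative phi &
    k%:Z <= flow_value phi \/ exists X, cut_weight X <= flow_value phi].
  elim: k => [|k [phi [phi_feas phi_cons [k_le|cut_le]]]]; last 1 first.
  - by exists phi; split => //; right.
  - have val0 : flow_value (fun=> 0) = 0.
      by rewrite /flow_value big1 // => u _; rewrite /outflow big1 // => a _; rewrite /arc_flow mulr0.
    exists (fun=> 0); split; rewrite ?val0; try by left.
    + by move=> e; rewrite normr0.
    + by move=> v; rewrite /outflow big1 // => a _; rewrite /arc_flow mulr0.
  case: (augment_or_saturated_cut phi_feas phi_cons) => [[phi' [feas' cons' val']]|cut_le].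
    by exists phi'; split => //; left; rewrite val'; move: k_le; lia.
  by exists phi; split => //; right.
have [phi [phi_feas phi_cons [val_ge|cut_le]]] := flow_ge (absz (cut_weight set0)).+1;
  last by exists phi.
have := flow_value_le_cut_weight set0 phi_feas phi_cons.
have w_ge0 : 0 <= cut_weight set0 by apply: sumr_ge0.
by move: val_ge; rewrite -[cut_weight set0]gez0_abs //; lia.
Qed.

Lemma positive_walk phi : conservative phi -> 0 < flow_value phi ->
  exists u p, [/\ walk (inl u) p, all (fun a => 0 < arc_flow phi a) p & uniq (map fst p)].
Proof.
move=> phi_cons val_gt0.
case: (walk_or_closed_set ends (fun a => 0 < arc_flow phi a)) => // [[X X_closed]].
move: val_gt0; rewrite (flow_value_cut X phi_cons) ltNge => /negP []; apply: sumr_le0.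
by move=> e cut_e; rewrite leNgt (closed_cut_arc X_closed cut_e).
Qed.

Lemma push_back_walk phi u p : feasible phi -> conservative phi -> walk (inl u) p ->
    uniq (map fst p) -> all (fun a => 0 < arc_flow phi a) p ->
  let phi' := push phi p (-1) in
  [/\ feasible phi', conservative phi', flow_value phi' = flow_value phi - 1,
      forall e, `|phi' e| <= `|phi e| & forall a, a \in p -> `|phi' a.1| < `|phi a.1|].
Proof.
move=> phi_feas phi_cons wp up pos_p phi'.
have [cons' val'] := push_walk (-1) phi_cons wp.
have lt_p a : a \in p -> `|phi' a.1| < `|phi a.1|.
  move=> ap; rewrite -!norm_arc_flow arc_flow_push_in //; have := allP pos_p a ap.
  set f := arc_flow phi a => f_gt0; rewrite [`|f|]gtr0_norm // ger0_norm; lia.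
split => // [|e].
  apply: push_feasible => // a ap; have pos_a := allP pos_p a ap.
  have /andP [lo hi] := arc_flow_bound a phi_feas; rewrite ler_norml.
  by set f := arc_flow phi a in pos_a lo hi *; set k := m a.1 in lo hi *; apply/andP; split; lia.
case: (boolP (e \in map fst p)) => [/mapP [a ap ->]|eNp]; first exact/ltW/lt_p.
by rewrite /phi' push_notin.
Qed.

(* [(a, i)] in a walk: the walk crosses arc [a] using the [i]-th unit of capacity of its edge. *)
Definition slot (ai : (E * bool) * nat) : E * nat := (ai.1.1, ai.2).

(* A walk peeled off [phi] uses on each edge [e] the slot [|phi' e|], where
   [phi'] is the flow left over; all later walks use slots below [|phi' e|]. *)
Lemma flow_walks n phi : feasible phi -> conservative phi -> flow_value phi = n%:Z ->
  exists rs : seq (seq ((E * bool) * nat)),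
  [/\ size rs = n, all (fun r => [exists u, walk (inl u) (map fst r)]) rs,
      uniq (flatten (map (map slot) rs)) &
      forall r ai, r \in rs -> ai \in r -> (ai.2)%:Z < `|phi ai.1.1|].
Proof.
elim: n phi => [|n IH] phi phi_feas phi_cons val_n; first by exists [::].
have [u [p [wp pos_p up]]] : exists u p,
    [/\ walk (inl u) p, all (fun a => 0 < arc_flow phi a) p & uniq (map fst p)].
  by apply: positive_walk; rewrite ?val_n.
have [feas' cons' val' le' lt'] := push_back_walk phi_feas phi_cons wp up pos_p.
have val_n' : flow_value (push phi p (-1)) = n%:Z by rewrite val' val_n; lia.
have [rs [size_rs walks_rs uniq_rs slot_lt]] := IH _ feas' cons' val_n'.
exists ([seq (a, absz (push phi p (-1) a.1)) | a <- p] :: rs); split => /=.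
- by rewrite size_rs.
- by rewrite walks_rs andbT; apply/existsP; exists u; rewrite -map_comp map_id_in.
- rewrite cat_uniq uniq_rs andbT; apply/andP; split.
    by apply: (@map_uniq _ _ fst); rewrite -!map_comp (@eq_map _ _ _ fst).
  apply/hasPn => s /flattenP [_ /mapP [r rrs ->] /mapP [ai air ->]].
  apply/negP => /mapP [_ /mapP [a ap ->] [e1 e2]].
  by have := slot_lt r ai rrs air; rewrite e1 e2 abszE ltxx.
- move=> r ai; rewrite inE => /orP [/eqP ->|rrs].
    by move=> /mapP [a ap ->] /=; rewrite abszE; exact: lt'.
  by move=> air; apply: lt_le_trans (slot_lt r ai rrs air) (le' _).
Qed.

Lemma disjoint_walks_cut : exists (X : {set V}) (rs : seq (seq ((E * bool) * nat))),
  [/\ (\sum_(e in cut_set ends X) m e <= size rs)%N,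
      all (fun r => [exists u, walk (inl u) (map fst r)]) rs,
      uniq (flatten (map (map slot) rs)) &
      forall r ai, r \in rs -> ai \in r -> (ai.2 < m ai.1.1)%N].
Proof.
have [phi [phi_feas phi_cons [X cut_le]]] := max_flow_min_cut.
have val_n : flow_value phi = (absz (flow_value phi))%:Z.
  by rewrite gez0_abs // (le_trans _ cut_le) // sumr_ge0.
have [rs [size_rs walks_rs uniq_rs slot_lt]] := flow_walks phi_feas phi_cons val_n.
exists X, rs; split => // [|r ai rrs air].
  rewrite -lez_nat size_rs -val_n (le_trans _ cut_le) // /cut_weight.
  by rewrite (big_morph Posz PoszD (erefl _)).
by rewrite -ltz_nat (lt_le_trans (slot_lt _ _ rrs air)) ?phi_feas.
Qed.

End Flows.

Lemma uniq_flatten_nth_index (A : eqType) (L : seq (seq A)) (j j' : nat) (x : A) :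
    uniq (flatten L) -> (j < size L)%N -> (j' < size L)%N ->
  x \in nth [::] L j -> x \in nth [::] L j' -> j = j'.
Proof.
elim: L j j' => [|s L IH] // [|j] [|j'] //=; rewrite cat_uniq => /and3P [_ sNL uL].
- move=> _ j'_lt xs xL; case/negP: sNL; apply/hasP; exists x => //.
  by apply/flattenP; exists (nth [::] L j') => //; apply: mem_nth.
- move=> j_lt _ xL xs; case/negP: sNL; apply/hasP; exists x => //.
  by apply/flattenP; exists (nth [::] L j) => //; apply: mem_nth.
- by move=> j_lt j'_lt xLj xLj'; congr _.+1; apply: IH xLj xLj'.
Qed.

Section CopyTensor.
Variables (S T V E : finType) (ends : E -> node S T V * node S T V) (c : E -> nat).
Variable C : numClosedFieldType.
Variables (d : nat) (m : E -> nat) (rs : seq (seq ((E * bool) * nat))).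
Hypothesis d_gt0 : (0 < d)%N.
Hypothesis c_pow : forall e, c e = (d ^ m e)%N.
Hypothesis ends_deg1 : open_ends_degree_one ends.
Hypothesis rs_walks : all (fun r => [exists u, walk_to_output ends (inl u) (map fst r)]) rs.
Hypothesis rs_uniq : uniq (flatten (map (map (@slot E)) rs)).
Hypothesis rs_slot : forall r ai, r \in rs -> ai \in r -> (ai.2 < m ai.1.1)%N.

Local Notation n := (size rs).
Local Notation EA := (edge_assign c).
Local Notation digits e := {ffun 'I_(m e) -> 'I_d}.
Local Notation labels := {ffun 'I_n -> 'I_d}.

Let digit0 : 'I_d := Ordinal d_gt0.

(* An index of [C^(c e)] is read as [m e] digits in base [d], one per slot. *)
Lemma card_digits e : #|{: digits e}| = c e.
Proof. by rewrite card_ffun !card_ord c_pow. Qed.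

Definition encode e (f : digits e) : 'I_(c e) := cast_ord (card_digits e) (enum_rank f).
Definition decode e (w : 'I_(c e)) : digits e :=
  enum_val (cast_ord (esym (card_digits e)) w).

Lemma encodeK e : cancel (@encode e) (@decode e).
Proof. by move=> f; rewrite /decode /encode cast_ordK enum_rankK. Qed.

Lemma decodeK e : cancel (@decode e) (@encode e).
Proof. by move=> w; rewrite /decode /encode enum_valK cast_ordKV. Qed.

Definition digit e (f : digits e) (i : nat) : 'I_d :=
  if insub i is Some k then f k else digit0.

Lemma digit_ord e (f : digits e) (k : 'I_(m e)) : digit f k = f k.
Proof. by rewrite /digit valK. Qed.

Definition slot_owner e (k : 'I_(m e)) : option 'I_n :=
  [pick j : 'I_n | (e, val k) \in map (@slot E) (nth [::] rs j)].

Lemma slot_ownerE (j : 'I_n) ai (ai_lt : (ai.2 < m ai.1.1)%N) :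
  ai \in nth [::] rs j -> slot_owner (Ordinal ai_lt) = Some j.
Proof.
move=> ai_j; rewrite /slot_owner; case: pickP => [j' slot_j'|]; last first.
  by move/(_ j); rewrite /= (map_f (@slot E) ai_j).
have nth_slots (k : 'I_n) :
    nth [::] (map (map (@slot E)) rs) k = map (@slot E) (nth [::] rs k).
  by rewrite (nth_map [::]).
congr Some; apply: val_inj => /=.
apply: (@uniq_flatten_nth_index _ _ j' j (ai.1.1, ai.2) rs_uniq); rewrite ?size_map //.
  by rewrite nth_slots.
by rewrite nth_slots (map_f (@slot E) ai_j).
Qed.

Lemma slot_owner_some e (k : 'I_(m e)) j : slot_owner k = Some j ->
  exists2 ai, ai \in nth [::] rs j & ai.1.1 = e /\ ai.2 = k.
Proof.
rewrite /slot_owner; case: pickP => // j' + [<-].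
by case/mapP => ai ai_j [e_ai k_ai]; exists ai.
Qed.

Definition pattern (x : labels) : EA :=
  [ffun e => encode [ffun k => if slot_owner k is Some j then x j else digit0]].

Lemma decode_pattern x e (k : 'I_(m e)) :
  decode (pattern x e) k = if slot_owner k is Some j then x j else digit0.
Proof. by rewrite ffunE encodeK ffunE. Qed.

Lemma digit_pattern x (j : 'I_n) ai : ai \in nth [::] rs j ->
  digit (decode (pattern x ai.1.1)) ai.2 = x j.
Proof.
move=> ai_j; have ai_lt := rs_slot (mem_nth [::] (ltn_ord j)) ai_j.
by rewrite -[ai.2]/(val (Ordinal ai_lt)) digit_ord decode_pattern (slot_ownerE ai_lt ai_j).
Qed.

Local Open Scope ring_scope.

Definition copy_tensor : tensor_assign ends c C := fun v =>
  [ffun L => [exists x, L == restrict ends (pattern x) v]%:R].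

Definition locally_patterned (W : EA) : bool :=
  [forall v, [exists x, restrict ends W v == restrict ends (pattern x) v]].

Lemma prod_copy_tensor W :
  \prod_v copy_tensor v (restrict ends W v) = (locally_patterned W)%:R.
Proof.
case: (boolP (locally_patterned W)) => [/forallP W_pat|/forallPn [v W_Npat]].
  by rewrite big1 // => v _; rewrite ffunE W_pat.
by rewrite (bigD1 v) //= ffunE (negbTE W_Npat) mul0r.
Qed.

Lemma locally_patterned_at W v : locally_patterned W ->
  exists x, forall h, hend ends h = inr (inr v) -> W h.1 = pattern x h.1.
Proof.
move/forallP/(_ v)/existsP => [x /eqP/ffunP W_x]; exists x => h h_v.
have h_inc : hend ends h == inr (inr v) by rewrite h_v.
by move: (W_x (Sub h h_inc : incident ends v)); rewrite !ffunE.
Qed.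

Definition input_of (x : labels) : in_assign ends c :=
  [ffun u => match [pick h | hend ends h == inl u] as o
     return 'I_(if o is Some h then c h.1 else 1) with
     | Some h => pattern x h.1 | None => ord0 end].

Definition output_of (x : labels) : out_assign ends c :=
  [ffun t => match [pick h | hend ends h == inr (inl t)] as o
     return 'I_(if o is Some h then c h.1 else 1) with
     | Some h => pattern x h.1 | None => ord0 end].

Lemma val_pick_ord (P : pred (E * bool)) (f : forall h : E * bool, 'I_(c h.1)) h :
    #|P| = 1%N -> P h ->
  val (match [pick h | P h] as o return 'I_(if o is Some h then c h.1 else 1) with
       | Some h => f h | None => ord0 end) = val (f h).
Proof.
move=> P1 Ph; case: pickP => [h' Ph'|/(_ h)]; last by rewrite Ph.
have P_le1 : (#|P| <= 1)%N by rewrite P1.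
by rewrite (card_le1_eqP P_le1 h' h).
Qed.

Lemma input_ofE x h u : hend ends h = inl u -> val (input_of x u) = val (pattern x h.1).
Proof.
move=> h_u; rewrite ffunE (val_pick_ord (fun h => pattern x h.1) (h := h)) ?h_u //.
exact: ends_deg1.1.
Qed.

Lemma output_ofE x h t : hend ends h = inr (inl t) ->
  val (output_of x t) = val (pattern x h.1).
Proof.
move=> h_t; rewrite ffunE (val_pick_ord (fun h => pattern x h.1) (h := h)) ?h_t //.
exact: ends_deg1.2.
Qed.

Lemma walk_digit_step W (j : 'I_n) ai bi : locally_patterned W ->
    ai \in nth [::] rs j -> bi \in nth [::] rs j ->
    is_vertex (arc_head ends ai.1) -> arc_tail ends bi.1 = arc_head ends ai.1 ->
  digit (decode (W bi.1.1)) bi.2 = digit (decode (W ai.1.1)) ai.2.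
Proof.
move=> W_pat ai_j bi_j; case hd_ai: (arc_head ends ai.1) => [|[|v]] // _ tl_bi.
have [xv W_xv] := locally_patterned_at v W_pat.
have W_ai : W ai.1.1 = pattern xv ai.1.1 by apply: (W_xv (ai.1.1, ~~ ai.1.2)).
have W_bi : W bi.1.1 = pattern xv bi.1.1 by apply: W_xv; exact: tl_bi.
by rewrite W_ai W_bi (digit_pattern xv ai_j) (digit_pattern xv bi_j).
Qed.

(* Along each walk, the copy tensors at its vertices propagate the digit it
   carries at its input. *)
Lemma walk_digit W x (j : 'I_n) ai : locally_patterned W ->
    (forall h u, hend ends h = inl u -> W h.1 = pattern x h.1) ->
  ai \in nth [::] rs j -> digit (decode (W ai.1.1)) ai.2 = x j.
Proof.
move=> W_pat W_in; set r := nth [::] rs j.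
have [u walk_r] := existsP (allP rs_walks r (mem_nth [::] (ltn_ord j))).
have digit_const r' ai0 y : {subset ai0 :: r' <= r} ->
    walk_to_output ends y (map fst (ai0 :: r')) ->
  forall bi, bi \in ai0 :: r' -> digit (decode (W bi.1.1)) bi.2 = digit (decode (W ai0.1.1)) ai0.2.
  elim: r' ai0 y => [|bi0 r' IH] ai0 y r'_r /=; first by move=> _ bi; rewrite inE => /eqP ->.
  case/andP=> _ /andP [hd_vx walk_r'] bi; rewrite inE => /predU1P [-> //|bi_r'].
  have bi0_step : digit (decode (W bi0.1.1)) bi0.2 = digit (decode (W ai0.1.1)) ai0.2.
    apply: (walk_digit_step (j := j)) => //; try by apply: r'_r; rewrite !inE eqxx ?orbT.
    by case/andP: walk_r' => /eqP.
  by rewrite -bi0_step (IH bi0 (arc_head ends ai0.1)) // => b b_r'; rewrite r'_r // inE b_r' orbT.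
case r_def: r walk_r => [|ai0 r'] // walk_r ai_r.
have ai0_r : ai0 \in r by rewrite r_def inE eqxx.
rewrite (digit_const r' ai0 (inl u)) //; last by move=> b; rewrite r_def.
by rewrite (W_in ai0.1 u) ?(digit_pattern x ai0_r) //; case/andP: walk_r => /eqP.
Qed.

Lemma agrees_pattern_ends x y W : agrees (input_of x) (output_of y) W ->
  (forall h u, hend ends h = inl u -> W h.1 = pattern x h.1) /\
  (forall h t, hend ends h = inr (inl t) -> W h.1 = pattern y h.1).
Proof.
move/forallP=> agr; split=> [h u h_u|h t h_t]; apply: val_inj; move: (agr h).
  by rewrite h_u => /eqP ->; exact: input_ofE.
by rewrite h_t => /eqP ->; exact: output_ofE.
Qed.

Lemma patterned_labels_eq x y W : locally_patterned W ->
  agrees (input_of x) (output_of y) W -> x = y.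
Proof.
move=> W_pat /agrees_pattern_ends [W_in W_out]; apply/ffunP => j.
have [u walk_j] := existsP (allP rs_walks _ (mem_nth [::] (ltn_ord j))).
have [_ /mapP [ai ai_j ->] hd_out] := walk_output_arc walk_j.
rewrite -(walk_digit W_pat W_in ai_j).
case hd_ai: (arc_head ends ai.1) hd_out => [|[t|]] // _.
by rewrite (W_out (ai.1.1, ~~ ai.1.2) t hd_ai) (digit_pattern y ai_j).
Qed.

Lemma patterned_eq_pattern x W : locally_patterned W ->
  agrees (input_of x) (output_of x) W -> W = pattern x.
Proof.
move=> W_pat /agrees_pattern_ends [W_in W_out].
apply/ffunP => e; apply: (can_inj (@decodeK e)); apply/ffunP => k.
rewrite decode_pattern; case owner_k: (slot_owner k) => [j|].
  have [ai ai_j [e_ai k_ai]] := slot_owner_some owner_k.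
  move: (walk_digit W_pat W_in ai_j); rewrite k_ai.
  by case: ai e_ai {ai_j k_ai} => [[e' b] i] /= e_ai; subst e'; rewrite digit_ord.
case e1: (ends e).1 => [u|[t|v]].
- by rewrite (W_in (e, true) u e1) decode_pattern owner_k.
- by rewrite (W_out (e, true) t e1) decode_pattern owner_k.
- have [xv W_xv] := locally_patterned_at v W_pat.
  by rewrite (W_xv (e, true) e1) decode_pattern owner_k.
Qed.

Lemma agrees_locally_patternedE x y W :
  agrees (input_of x) (output_of y) W && locally_patterned W = (x == y) && (W == pattern x).
Proof.
apply/andP/andP => [[agr W_pat]|[/eqP <- /eqP ->]].
  have xy := patterned_labels_eq W_pat agr; subst y.
  by rewrite eqxx (patterned_eq_pattern W_pat agr).
split; last by apply/forallP => v; apply/existsP; exists x.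
apply/forallP => h; case h_e: (hend ends h) => [u|[t|v]] //.
  by rewrite (input_ofE x h_e).
by rewrite (output_ofE x h_e).
Qed.

Lemma beta_copy_entry x y :
  beta_entry copy_tensor (input_of x) (output_of y) = (x == y)%:R.
Proof.
transitivity (\sum_W (agrees (input_of x) (output_of y) W && locally_patterned W)%:R : C).
  rewrite /beta_entry big_mkcond; apply: eq_bigr => W _.
  by rewrite prod_copy_tensor; case: (agrees _ _ W).
under eq_bigr do rewrite agrees_locally_patternedE.
case: eqP => [_|_] /=; last by rewrite big1.
by rewrite (bigD1 (pattern x)) //= eqxx big1 ?addr0 // => W /negbTE ->.
Qed.

Lemma rank_beta_copy_ge : (d ^ n <= \rank (beta_mx copy_tensor))%N.
Proof.
pose sel_in : 'M[C]_(#|{: in_assign ends c}|, #|{: labels}|) :=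
  \matrix_(i, k) (enum_rank (input_of (enum_val k)) == i)%:R.
pose sel_out : 'M[C]_(#|{: labels}|, #|{: out_assign ends c}|) :=
  \matrix_(k, i) (enum_rank (output_of (enum_val k)) == i)%:R.
have sel_beta : sel_out *m beta_mx copy_tensor *m sel_in = 1%:M.
  apply/matrixP => k l; rewrite !mxE; under eq_bigr do rewrite !mxE.
  rewrite sum_mul_delta; under eq_bigr do rewrite !mxE mulrC.
  rewrite sum_mul_delta !enum_rankK beta_copy_entry.
  by rewrite (inj_eq enum_val_inj) eq_sym.
have <- : #|{: labels}| = (d ^ n)%N by rewrite card_ffun !card_ord.
rewrite -[X in (X <= _)%N](mxrank1 C #|{: labels}|) -sel_beta.
by rewrite (leq_trans (mxrankM_maxl _ _)) ?mxrankM_maxr.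
Qed.

End CopyTensor.

Section MinCut.
Variables (S T V E : finType) (ends : E -> node S T V * node S T V) (c : E -> nat).

Lemma QMC_le_cut_cap X : (QMC ends c <= cut_cap ends c X)%N.
Proof.
rewrite /QMC; elim: (index_enum _) (mem_index_enum X) => // Y r IH.
rewrite inE big_cons => /predU1P [<-|X_r]; first exact: geq_minl.
exact: leq_trans (geq_minr _ _) (IH X_r).
Qed.

Lemma QMC_attained : exists X, QMC ends c = cut_cap ends c X.
Proof.
rewrite /QMC; apply: (big_ind (fun k => exists X, k = cut_cap ends c X)); first by exists set0.
  by move=> _ _ [X1 ->] [X2 ->]; rewrite /minn; case: ltnP; [exists X1|exists X2].
by move=> X _; exists X.
Qed.

Lemma cut_cap_pow d m X : (forall e, c e = d ^ m e)%N ->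
  cut_cap ends c X = (d ^ (\sum_(e in cut_set ends X) m e))%N.
Proof. by move=> c_pow; rewrite /cut_cap expn_sum; apply: eq_bigr => e _; rewrite c_pow. Qed.

End MinCut.

Theorem theorem3p8 (C : numClosedFieldType) (S T V E : finType)
    (ends : E -> node S T V * node S T V) (c : E -> nat) :
  open_ends_degree_one ends ->
  (forall e : E, (0 < c e)%N) ->
  (exists d : nat, (0 < d)%N /\ forall e : E, exists m : nat, c e = (d ^ m)%N) ->
  @is_QMF S T V E ends c C (QMC ends c).
Proof.
move=> ends_deg1 c_gt0 [d [d_gt0 c_pow_ex]].
have [m c_pow] := fin_all_exists c_pow_ex.
have rank_le (Tn : tensor_assign ends c C) : (\rank (beta_mx Tn) <= QMC ends c)%N.
  by have [X ->] := QMC_attained ends c; exact: rank_beta_le_cut_cap c_gt0 X Tn.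
split => //.
have [X [rs [cut_le rs_walks rs_uniq rs_slot]]] := disjoint_walks_cut ends m.
exists (copy_tensor ends C rs d_gt0 c_pow); apply/eqP; rewrite eqn_leq rank_le /=.
apply: leq_trans (rank_beta_copy_ge C d_gt0 c_pow ends_deg1 rs_walks rs_uniq rs_slot).
by rewrite (leq_trans (QMC_le_cut_cap ends c X)) // (cut_cap_pow _ X c_pow) leq_pexp2l.
Qed.
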